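(* Let $q$ be an odd prime power, $d$ a positive integer, $\varphi_d$ the coloring defined below, and let $p\ge 2$ and $T \ge 0$ be integers. Let $S\subseteq(\mathbb{F}_q^* )^d$ be a set of $p$ vectors with a leftover structure under $\varphi_d$. If $T\ge 1$, suppose further that $a_1,\dots,a_T\in(\mathbb{F}_q^* )^d$ (distinct, and not in $S$) and $\alpha_1,\dots,\alpha_T\in C_d$ satisfy $\varphi_d(a_i,a_j) = \alpha_i$ for all $1\le i<j\le T$ and $\varphi_d(a_i,s) = \alpha_i$ for all $1 \le i\le T$ and all $s\in S$. Then there is a sequence of positive integers $x_1,\dots,x_t$ with $\sum_{i=1}^t x_i = p-1$ such that, writing $s_1 = 0$ and $s_i = \sum_{j=1}^{i-1} x_j$ for $i \ge 2$, for every $i=1,\dots,t$: (1) $1\le x_i \le \lfloor (p-s_i)/2\rfloor$; (2) $\lceil\log_2 x_i\rceil + \lceil \log_2(p-s_i-x_i)\rceil \le d-1$; (3) $\lceil \log_2(p-s_i-x_i)\rceil \le d - i - T$.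
   Context: $\mathbb{F}_q^*$ is the set of nonzero elements of $\mathbb{F}_q$, endowed with an arbitrary fixed linear order; $(\mathbb{F}_q^* )^d$ is ordered lexicographically with respect to it. Let $C_d = \mathrm{DOT} \sqcup \mathrm{ZERO}\sqcup\mathrm{UP}\sqcup\mathrm{DOWN}$, where $\mathrm{DOT} = \mathbb{F}_q^*$ and ZERO, UP, DOWN are three disjoint copies of $\{1,\dots,d\}\times \mathbb{F}_q$. For distinct $x<y$ in $(\mathbb{F}_q^* )^d$, let $i$ be the first coordinate where $x$ and $y$ differ, and $x\cdot y$ the standard dot product; $\varphi_d(x,y)=\varphi_d(y,x)$ is $(i,x_i+y_i)$ in ZERO if $x\cdot y=0$; $(i,x_i+y_i)$ in UP if $x\cdot y\ne 0$ and $x\cdot y=x\cdot x$; $(i,x_i+y_i)$ in DOWN if $x\cdot y\notin\{0,x\cdot x\}$ and $x\cdot y=y\cdot y$; and $x\cdot y\in\mathrm{DOT}$ otherwise. For a vertex set $A$, $\varphi_d(A)$ is the set of colors on pairs inside $A$. $S$ has a leftover structure under $\varphi_d$ if $|S|=1$, or $S$ has a partition $S=A\cup B$ into nonempty sets such that $A$ and $B$ each have a leftover structure, $\varphi_d(A)\cap\varphi_d(B)=\emptyset$, and there is a color $\gamma$ with $\varphi_d(a,b)=\gamma$ for all $a\in A$, $b\in B$ and $\gamma\notin\varphi_d(A)\cup\varphi_d(B)$. *)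

From HB Require Import structures.
From mathcomp Require Import all_boot all_order all_algebra all_field.
Set Implicit Arguments. Unset Strict Implicit. Unset Printing Implicit Defensive.
Import GRing.Theory.
Local Open Scope ring_scope.

(* Vectors of F^d, represented as finite functions 'I_d -> F.
   Vertex set (F_q^* )^d = vectors with all coordinates nonzero. *)
Definition vec (F : finFieldType) (d : nat) := {ffun 'I_d -> F}.

Definition nzvec (F : finFieldType) (d : nat) (x : vec F d) : bool :=
  [forall i, x i != 0].

Definition dotp (F : finFieldType) (d : nat) (x y : vec F d) : F :=
  \sum_(i < d) x i * y i.

(* The color set C_d = DOT ⊔ ZERO ⊔ UP ⊔ DOWN, DOT = F^*,
   ZERO, UP, DOWN = copies of {1..d} x F (indices 0-based here). *)
Inductive color (F : Type) (d : nat) : Type :=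
| CDot of F
| CZero of 'I_d & F
| CUp of 'I_d & F
| CDown of 'I_d & F.

Definition first_diff (F : finFieldType) (d : nat) (x y : vec F d) : option 'I_d :=
  [pick i : 'I_d | (x i != y i) && [forall j : 'I_d, (j < i)%N ==> (x j == y j)]].

(* The fixed linear order on F^* is given by an injective [rank : F -> nat]
   (on nonzero elements): u < v iff rank u < rank v.  The lexicographic order
   on (F^* )^d compares at the first differing coordinate. *)
Definition phi (F : finFieldType) (d : nat) (rank : F -> nat) (x y : vec F d)
  : color F d :=
  match first_diff x y with
  | None => CDot d 0 (* x = y: irrelevant *)
  | Some i =>
      let a := if (rank (x i) < rank (y i))%N then x else y in
      let b := if (rank (x i) < rank (y i))%N then y else x in
      let ab := dotp a b in
      if ab == 0 then CZero i (a i + b i)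
      else if ab == dotp a a then CUp i (a i + b i)
      else if ab == dotp b b then CDown i (a i + b i)
      else CDot d ab
  end.

Definition in_colors (F : finFieldType) (d : nat) (rank : F -> nat)
  (A : {set vec F d}) (c : color F d) : Prop :=
  exists x y, [/\ x \in A, y \in A, x != y & phi rank x y = c].

Inductive leftover (F : finFieldType) (d : nat) (rank : F -> nat)
  : {set vec F d} -> Prop :=
| leftover_single (x : vec F d) : leftover rank [set x]
| leftover_split (A B : {set vec F d}) (g : color F d) :
    A != set0 -> B != set0 -> [disjoint A & B] ->
    leftover rank A -> leftover rank B ->
    (forall c, in_colors rank A c -> ~ in_colors rank B c) ->
    (forall a b, a \in A -> b \in B -> phi rank a b = g) ->
    ~ in_colors rank A g -> ~ in_colors rank B g ->
    leftover rank (A :|: B).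

(** Measure a vertex set [X] by the rank of its difference space
    [W X = span {x - y | x, y in X}].  If a vertex [c] outside [Y] sees all of
    [Y] in one colour, then [c - y] is not in [W Y]: for a coordinate colour
    the [i]-th coordinate is constant on [Y] but differs at [c], for a [DOT]
    colour the functional [dotp c] is constant on [Y] but not at [c].  Hence
    both halves of a leftover split [A :|: B] have smaller rank than the union.
    Moreover the constant cross colour makes [dotp a b] depend on one side
    only, say on [a], so [W B] is orthogonal to [W A + a0] for some
    [a0 \notin W A], and [rank W A + rank W B + 1 <= d].  Induction over the
    leftover structure gives [up_log 2 #|S| <= rank W S]; splitting off the
    smaller half at each step produces the sequence, and the chain
    [a_1, ..., a_T] raises the rank by [T]. *)
From Pilot Require Import Defs.
From HB Require Import structures.
From mathcomp Require Import all_boot all_order all_algebra all_field.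
From mathcomp Require Import zify.
Set Implicit Arguments. Unset Strict Implicit. Unset Printing Implicit Defensive.
Import GRing.Theory.

Lemma up_logD_lt m n r :
  up_log 2 m < r -> up_log 2 n < r -> up_log 2 (m + n) <= r.
Proof.
case: r => // r hm hn; apply: up_log_min => //.
rewrite expnS mul2n -addnn leq_add //.
  by apply: leq_trans (@up_logP 2 m isT) _; rewrite leq_exp2l.
by apply: leq_trans (@up_logP 2 n isT) _; rewrite leq_exp2l.
Qed.

Definition admissible (d T p : nat) := exists x : seq nat,
  sumn x = p.-1 /\
  (forall k, k < size x ->
     let s := sumn (take k x) in
     let xk := nth 0 x k in
     [/\ 1 <= xk <= (p - s)./2,
         up_log 2 xk + up_log 2 (p - s - xk) + 1 <= d
       & up_log 2 (p - s - xk) + k.+1 + T <= d]).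

Lemma admissible_cons d T m n : 1 <= m <= n ->
  up_log 2 m + up_log 2 n + 1 <= d -> up_log 2 n + 1 + T <= d ->
  (2 <= n -> admissible d T.+1 n) -> admissible d T (m + n).
Proof.
move=> /andP[m_gt0 le_mn] hmn hnT IHn.
have [n_le1|n_gt1] := leqP n 1.
  have m1 : m = 1 by lia.
  have n1 : n = 1 by lia.
  by subst m n; exists [:: 1]; split=> // -[|k].
have [x [sum_x hx]] := IHn n_gt1.
exists (m :: x); split; first by rewrite /= sum_x; lia.
case=> [|k] /= hk.
  rewrite subn0 addKn; split=> //.
  by rewrite m_gt0 -divn2 leq_divRL // muln2 -addnn leq_add2l.
have [xk_le log_le hT] := hx k hk.
by rewrite subnDA addKn; split=> //; move: hT; rewrite !addnS addSn.
Qed.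

Lemma admissible_split d T m n rm rn r :
  0 < m -> 0 < n -> up_log 2 m <= rm -> up_log 2 n <= rn -> rm < r -> rn < r ->
  rm + rn + 1 <= d -> r + T <= d ->
  (forall T', 2 <= m -> rm + T' <= d -> admissible d T' m) ->
  (forall T', 2 <= n -> rn + T' <= d -> admissible d T' n) ->
  admissible d T (m + n).
Proof.
wlog le_mn : m n rm rn / m <= n => [hwlog|].
  have [le_mn|/ltnW le_nm] := leqP m n; first exact: hwlog.
  move=> *; rewrite addnC; apply: (hwlog n m rn rm) => //; lia.
move=> m_gt0 _ hm hn rm_lt rn_lt hd hT _ IHn.
apply: admissible_cons; [lia | lia | lia |].
by move=> n_gt1; apply: IHn => //; lia.
Qed.

Section DifferenceSpace.
Variables (F : finFieldType) (d : nat).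
Local Notation vec := (vec F d).
Local Open Scope ring_scope.
Implicit Types (x y w : vec) (X Y : {set vec}).

Lemma dotpC x y : dotp x y = dotp y x.
Proof. by apply: eq_bigr => i _; rewrite mulrC. Qed.

Definition unitv (i : 'I_d) : vec := [ffun k => (k == i)%:R].

Lemma dotp_unitv x i : dotp x (unitv i) = x i.
Proof.
rewrite /dotp (bigD1 i) //= big1 => [|k /negbTE k_i]; rewrite ffunE.
  by rewrite eqxx mulr1 addr0.
by rewrite k_i mulr0.
Qed.

Definition rowv x : 'rV[F]_d := \row_i x i.

Definition diff_space X : 'M[F]_d :=
  (\sum_(x in X) \sum_(y in X) <<rowv x - rowv y>>)%MS.

Lemma rowv_dotp x y : rowv x *m (rowv y)^T = (dotp x y)%:M.
Proof.
apply/matrixP => i j; rewrite !ord1 !mxE /= mulr1n.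
by apply: eq_bigr => k _; rewrite !mxE.
Qed.

Lemma rowvB_dotp x y w :
  (rowv x - rowv y) *m (rowv w)^T = (dotp x w - dotp y w)%:M.
Proof. by rewrite mulmxBl !rowv_dotp raddfB. Qed.

Lemma scalar_mx1_eq0 (a : F) : (a%:M == 0 :> 'M_1) = (a == 0).
Proof.
apply/eqP/eqP => [/matrixP/(_ 0 0)|->]; last exact: raddf0.
by rewrite !mxE mulr1n.
Qed.

Lemma diff_space_sub X x y : x \in X -> y \in X ->
  (rowv x - rowv y <= diff_space X)%MS.
Proof.
by move=> hx hy; apply: (sumsmx_sup x) => //; apply: (sumsmx_sup y); rewrite ?genmxE.
Qed.

Lemma diff_spaceS X Y : X \subset Y -> (diff_space X <= diff_space Y)%MS.
Proof.
move=> sXY; apply/sumsmx_subP => x hx; apply/sumsmx_subP => y hy.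
by rewrite genmxE diff_space_sub ?(subsetP sXY).
Qed.

Lemma diff_space_ker X k (u : 'M[F]_(d, k)) :
  {in X &, forall x y, (rowv x - rowv y) *m u = 0} ->
  (diff_space X <= kermx u)%MS.
Proof.
move=> hu; apply/sumsmx_subP => x hx; apply/sumsmx_subP => y hy.
by rewrite genmxE sub_kermx hu.
Qed.

Lemma notin_diff_space X w (v : 'rV[F]_d) :
  {in X &, forall x x', dotp x w = dotp x' w} ->
  v *m (rowv w)^T != 0 -> ~~ (v <= diff_space X)%MS.
Proof.
move=> hw; apply: contra => vX; apply/eqP/sub_kermxP; apply: submx_trans vX _.
by apply: diff_space_ker => x y hx hy; rewrite rowvB_dotp (hw x y) // subrr raddf0.
Qed.

Lemma notin_diff_space_coord X i x0 : x0 \in X ->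
  {in X, forall x, x i = x0 i} -> x0 i != 0 -> ~~ (rowv x0 <= diff_space X)%MS.
Proof.
move=> hx0 hi nz; apply: (notin_diff_space (w := unitv i)).
  by move=> x x' hx hx'; rewrite !dotp_unitv (hi x hx) (hi x' hx').
by rewrite rowv_dotp dotp_unitv scalar_mx1_eq0.
Qed.

Lemma mxrank_diff_space_lt X Y (v : 'rV[F]_d) :
  X \subset Y -> (v <= diff_space Y)%MS -> ~~ (v <= diff_space X)%MS ->
  (\rank (diff_space X) < \rank (diff_space Y))%N.
Proof.
move=> sXY vY vX; apply: rank_ltmx; rewrite ltmxE diff_spaceS //=.
by apply: contra vX; apply: submx_trans.
Qed.

Lemma mxrank_diff_space_orth X Y x0 (f : vec -> F) : x0 \in X ->
  (forall x y, x \in X -> y \in Y -> dotp x y = f x) ->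
  ~~ (rowv x0 <= diff_space X)%MS ->
  (\rank (diff_space X) + \rank (diff_space Y) + 1 <= d)%N.
Proof.
move=> hx0 hdot x0X; pose U := (diff_space X + rowv x0)%MS.
have rkU : (\rank (diff_space X) < \rank U)%N.
  apply: rank_ltmx; rewrite ltmxE addsmxSl /=.
  by apply: contra x0X; apply: submx_trans (addsmxSr _ _).
have YU : (diff_space Y <= kermx U^T)%MS.
  apply: diff_space_ker => y y' hy hy'.
  rewrite -[_ *m U^T]trmxK trmx_mul trmxK; apply/eqP; rewrite trmx_eq0.
  apply/eqP/sub_kermxP; rewrite addsmx_sub; apply/andP; split.
    apply: diff_space_ker => x x' hx hx'.
    by rewrite linearB /= mulmxBl !mulmxBr !rowv_dotp !hdot // !subrr.
  by rewrite sub_kermx linearB /= mulmxBr !rowv_dotp !hdot // subrr.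
have := mxrankS YU; rewrite mxrank_ker mxrank_tr.
have := rank_leq_col U; lia.
Qed.

Lemma mxrank_diff_space_orthC X Y y0 (f : vec -> F) : y0 \in Y ->
  (forall x y, x \in X -> y \in Y -> dotp x y = f y) ->
  ~~ (rowv y0 <= diff_space Y)%MS ->
  (\rank (diff_space X) + \rank (diff_space Y) + 1 <= d)%N.
Proof.
move=> y0Y hdot y0W; rewrite (addnC (\rank (diff_space X))).
by apply: (mxrank_diff_space_orth (f := f) y0Y _ y0W) => y x yY xX; rewrite dotpC hdot.
Qed.

Lemma mxrank_diff_space_cross_dot X Y x0 y0 (k : F) : x0 \in X -> y0 \in Y ->
  k != 0 -> (forall x y, x \in X -> y \in Y -> dotp x y = k) ->
  (\rank (diff_space X) + \rank (diff_space Y) + 1 <= d)%N.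
Proof.
move=> x0X y0Y k_neq0 hk; apply: (mxrank_diff_space_orth (f := fun=> k) x0X hk).
apply: (notin_diff_space (w := y0)) => [x x' xX x'X|]; first by rewrite !hk.
by rewrite rowv_dotp hk // scalar_mx1_eq0.
Qed.

End DifferenceSpace.

Arguments unitv {F d}.

Section Colouring.
Variables (F : finFieldType) (rank : F -> nat) (d : nat).
Local Notation vec := (vec F d).
Local Notation phi := (phi rank).
Local Notation W := diff_space.
Local Open Scope ring_scope.
Implicit Types (x y : vec) (S X Y Z A B : {set vec}).

Lemma first_diffP x y i : first_diff x y = Some i ->
  x i != y i /\ forall j : 'I_d, (j < i)%N -> x j = y j.
Proof.
rewrite /first_diff; case: pickP => // j /andP[hj /forallP hf] [<-].
by split=> // k hk; apply/eqP; exact: implyP (hf k) hk.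
Qed.

Lemma first_diff_neq x y : x != y -> exists i, first_diff x y = Some i.
Proof.
move=> nxy; rewrite /first_diff; case: pickP => [i _|none]; first by exists i.
have [i0 hi0] : exists i, x i != y i.
  apply/existsP; apply: contraR nxy; rewrite negb_exists => /forallP h.
  by apply/eqP/ffunP => i; apply/eqP; move: (h i); rewrite negbK.
case: (@arg_minnP _ i0 (fun i => x i != y i) val hi0) => i hi hmin.
move: (none i); rewrite hi /= => /negP[]; apply/forallP => j; apply/implyP.
by apply: contraTT => hj; rewrite -leqNgt hmin.
Qed.

Lemma first_diffC x y : first_diff x y = first_diff y x.
Proof.
apply: eq_pick => i /=; rewrite eq_sym; congr (_ && _).
by apply: eq_forallb => j; rewrite eq_sym.
Qed.

Definition pair_color i (lo hi : vec) : color F d :=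
  if dotp lo hi == 0 then CZero i (lo i + hi i)
  else if dotp lo hi == dotp lo lo then CUp i (lo i + hi i)
  else if dotp lo hi == dotp hi hi then CDown i (lo i + hi i)
  else CDot d (dotp lo hi).

Lemma phiE x y i : first_diff x y = Some i ->
  phi x y = if (rank (x i) < rank (y i))%N then pair_color i x y else pair_color i y x.
Proof. by move=> hi; rewrite /Defs.phi hi; case: (rank (x i) < rank (y i))%N. Qed.

Definition color_coord (g : color F d) : option ('I_d * F) :=
  match g with CDot _ => None | CZero i s | CUp i s | CDown i s => Some (i, s) end.

Lemma pair_color_coord i lo hi g j s : pair_color i lo hi = g ->
  color_coord g = Some (j, s) -> j = i /\ s = lo i + hi i.
Proof.
by rewrite /pair_color => <-; do 3 (case: eqP => _ /=; first by case=> <- <-).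
Qed.

Lemma pair_color_dot i lo hi k : pair_color i lo hi = CDot d k ->
  [/\ k = dotp lo hi, k != 0, k != dotp lo lo & k != dotp hi hi].
Proof.
rewrite /pair_color; case: eqP => // h0; case: eqP => // h1; case: eqP => // h2.
by case=> <-; split=> //; apply/eqP.
Qed.

Lemma pair_color_zero i lo hi j s : pair_color i lo hi = CZero j s -> dotp lo hi = 0.
Proof. by rewrite /pair_color; do 3 case: eqP => //. Qed.

Lemma pair_color_up i lo hi j s : pair_color i lo hi = CUp j s ->
  dotp lo hi = dotp lo lo.
Proof. by rewrite /pair_color; do 3 case: eqP => //. Qed.

Lemma pair_color_down i lo hi j s : pair_color i lo hi = CDown j s ->
  dotp lo hi = dotp hi hi.
Proof. by rewrite /pair_color; do 3 case: eqP => //. Qed.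

Lemma phi_coord x y g i s : x != y -> phi x y = g ->
  color_coord g = Some (i, s) -> first_diff x y = Some i /\ s = x i + y i.
Proof.
move=> nxy; have [j hj] := first_diff_neq nxy; rewrite (phiE hj).
by case: ifP => _ /pair_color_coord h /h[-> ->]; rewrite // addrC.
Qed.

Lemma phi_dot x y k : x != y -> phi x y = CDot d k ->
  [/\ k = dotp x y, k != 0 & k != dotp x x].
Proof.
move=> nxy; have [j hj] := first_diff_neq nxy; rewrite (phiE hj).
by case: ifP => _ /pair_color_dot[-> ? ? ?]; split; rewrite // dotpC.
Qed.

Lemma phi_zero x y i s : x != y -> phi x y = CZero i s -> dotp x y = 0.
Proof.
move=> nxy; have [j hj] := first_diff_neq nxy; rewrite (phiE hj).
by case: ifP => _ /pair_color_zero; rewrite // dotpC.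
Qed.

Lemma phi_up x y i s : x != y -> phi x y = CUp i s ->
  dotp x y = (let z := if (rank (x i) < rank (y i))%N then x else y in dotp z z).
Proof.
move=> nxy hxy; have [hi _] := phi_coord nxy hxy (erefl _).
by move: hxy; rewrite (phiE hi) /=; case: ifP => _ /pair_color_up; rewrite // dotpC.
Qed.

Lemma phi_down x y i s : x != y -> phi x y = CDown i s ->
  dotp x y = (let z := if (rank (x i) < rank (y i))%N then y else x in dotp z z).
Proof.
move=> nxy hxy; have [hi _] := phi_coord nxy hxy (erefl _).
by move: hxy; rewrite (phiE hi) /=; case: ifP => _ /pair_color_down; rewrite // dotpC.
Qed.

Lemma notin_diff_space_cone Y c y0 g : c \notin Y -> y0 \in Y ->
  {in Y, forall y, phi c y = g} -> ~~ (rowv c - rowv y0 <= W Y)%MS.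
Proof.
move=> cY y0Y hg; have neq_c y : y \in Y -> c != y by apply: contraTneq => <-.
case hc: (color_coord g) => [[i s]|].
  have hY y : y \in Y -> y i = s - c i.
    move=> yY; have [_ ->] := phi_coord (neq_c y yY) (hg y yY) hc.
    by rewrite [c i + _]addrC addrK.
  apply: (notin_diff_space (w := unitv i)) => [y y' yY y'Y|].
    by rewrite !dotp_unitv (hY y yY) (hY y' y'Y).
  rewrite rowvB_dotp !dotp_unitv scalar_mx1_eq0 subr_eq0.
  by have [/first_diffP[]] := phi_coord (neq_c y0 y0Y) (hg y0 y0Y) hc.
case: g hg hc => // k hg _.
have hk y : y \in Y -> [/\ k = dotp c y, k != 0 & k != dotp c c].
  by move=> yY; apply: phi_dot (neq_c y yY) (hg y yY).
apply: (notin_diff_space (w := c)) => [y y' yY y'Y|].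
  by rewrite dotpC (dotpC y'); case: (hk y yY) (hk y' y'Y) => <- _ _ [<-].
rewrite rowvB_dotp scalar_mx1_eq0 subr_eq0.
by rewrite (dotpC y0) eq_sym; case: (hk y0 y0Y) => <-.
Qed.

Lemma mxrank_diff_space_cone Y Z c y0 g : Y \subset Z -> c \in Z -> c \notin Y ->
  y0 \in Y -> {in Y, forall y, phi c y = g} ->
  (\rank (W Y) < \rank (W Z))%N.
Proof.
move=> sYZ cZ cY y0Y hg; apply: (mxrank_diff_space_lt (v := rowv c - rowv y0)) => //.
  by apply: diff_space_sub; last exact: (subsetP sYZ).
exact: notin_diff_space_cone hg.
Qed.

Lemma mxrank_diff_space_cross A B g :
  A != set0 -> B != set0 -> [disjoint A & B] -> {in A :|: B, forall x, nzvec x} ->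
  (forall a b, a \in A -> b \in B -> phi a b = g) ->
  (\rank (W A) + \rank (W B) + 1 <= d)%N.
Proof.
move=> /set0Pn[a0 a0A] /set0Pn[b0 b0B] disAB nzAB hg.
have neqAB a b : a \in A -> b \in B -> a != b.
  by move=> aA; apply: contraTneq => <-; rewrite (disjointFr disAB aA).
case hc: (color_coord g) => [[i s]|]; last first.
  case: g hg hc => // k hg _.
  have [_ k_neq0 _] := phi_dot (neqAB a0 b0 a0A b0B) (hg a0 b0 a0A b0B).
  apply: (mxrank_diff_space_cross_dot a0A b0B k_neq0) => a b aA bB.
  by case: (phi_dot (neqAB a b aA bB) (hg a b aA bB)).
have hsum a b : a \in A -> b \in B -> a i + b i = s.
  by move=> aA bB; have [_ ->] := phi_coord (neqAB a b aA bB) (hg a b aA bB) hc.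
have hA a : a \in A -> a i = a0 i by move=> aA; apply: (addIr (b0 i)); rewrite !hsum.
have hB b : b \in B -> b i = b0 i by move=> bB; apply: (addrI (a0 i)); rewrite !hsum.
have nz_i x : x \in A :|: B -> x i != 0 by move/nzAB/forallP.
have a0W : ~~ (rowv a0 <= W A)%MS.
  by apply: (notin_diff_space_coord a0A hA); rewrite nz_i // inE a0A.
have b0W : ~~ (rowv b0 <= W B)%MS.
  by apply: (notin_diff_space_coord b0B hB); rewrite nz_i // inE b0B orbT.
have lt_i a b : a \in A -> b \in B ->
    (rank (a i) < rank (b i))%N = (rank (a0 i) < rank (b0 i))%N.
  by move=> aA bB; rewrite (hA a aA) (hB b bB).
case: g hg hc => // j s' hg [ej _]; subst j.
- apply: (mxrank_diff_space_orth (f := fun=> 0) a0A _ a0W) => a b aA bB.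
  exact: phi_zero (neqAB a b aA bB) (hg a b aA bB).
- case lt0: (rank (a0 i) < rank (b0 i))%N.
  + apply: (mxrank_diff_space_orth (f := fun a => dotp a a) a0A _ a0W) => a b aA bB.
    by have := phi_up (neqAB a b aA bB) (hg a b aA bB); rewrite lt_i ?lt0.
  + apply: (mxrank_diff_space_orthC (f := fun b => dotp b b) b0B _ b0W) => a b aA bB.
    by have := phi_up (neqAB a b aA bB) (hg a b aA bB); rewrite lt_i ?lt0.
- case lt0: (rank (a0 i) < rank (b0 i))%N.
  + apply: (mxrank_diff_space_orthC (f := fun b => dotp b b) b0B _ b0W) => a b aA bB.
    by have := phi_down (neqAB a b aA bB) (hg a b aA bB); rewrite lt_i ?lt0.
  + apply: (mxrank_diff_space_orth (f := fun a => dotp a a) a0A _ a0W) => a b aA bB.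
    by have := phi_down (neqAB a b aA bB) (hg a b aA bB); rewrite lt_i ?lt0.
Qed.

Lemma mxrank_diff_space_chain T S (a : 'I_T -> vec) (alpha : 'I_T -> color F d)
    s0 (s : seq 'I_T) :
  s0 \in S -> injective a -> (forall i, a i \notin S) ->
  (forall i j : 'I_T, (i < j)%N -> phi (a i) (a j) = alpha i) ->
  (forall i y, y \in S -> phi (a i) y = alpha i) ->
  sorted (fun i j : 'I_T => (i < j)%N) s ->
  (\rank (W S) + size s <= \rank (W (S :|: a @: s)))%N.
Proof.
move=> s0S a_inj aS h_aa h_aS; elim: s => [|i s IHs] /= sorted_s.
  by rewrite addn0 mxrankS ?diff_spaceS ?subsetUl.
have lt_s : all (fun j : 'I_T => (i < j)%N) s.
  exact: order_path_min (fun j i k : 'I_T => @ltn_trans j i k) sorted_s.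
rewrite addnS; apply: leq_ltn_trans (IHs (path_sorted sorted_s)) _.
apply: (mxrank_diff_space_cone (c := a i) (y0 := s0) (g := alpha i)).
- by apply/setUS/imsetS/subsetP => j; rewrite inE => ->; rewrite orbT.
- by rewrite !inE mem_imset // inE eqxx orbT.
- rewrite inE negb_or aS mem_imset //=.
  by apply/negP => /(allP lt_s); rewrite ltnn.
- by rewrite inE s0S.
move=> y; rewrite inE => /orP[/h_aS //|/imsetP[j js ->]].
by apply: h_aa; apply: (allP lt_s).
Qed.

Hypothesis rank_inj : {in [pred u : F | u != 0] &, injective rank}.

Lemma phiC x y : nzvec x -> nzvec y -> phi x y = phi y x.
Proof.
move=> nzx nzy; have [->//|nxy] := eqVneq x y.
have [i hi] := first_diff_neq nxy.
have [xy_i _] := first_diffP hi.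
have rank_neq : rank (x i) != rank (y i).
  apply: contra xy_i => /eqP/rank_inj eq_i.
  by rewrite eq_i ?inE ?(forallP nzx) ?(forallP nzy).
rewrite (phiE hi) (phiE (etrans (first_diffC y x) hi)).
by case: ltngtP rank_neq.
Qed.

Lemma mxrank_diff_space_split A B g :
  A != set0 -> B != set0 -> [disjoint A & B] -> {in A :|: B, forall x, nzvec x} ->
  (forall a b, a \in A -> b \in B -> phi a b = g) ->
  [/\ (\rank (W A) < \rank (W (A :|: B)))%N,
      (\rank (W B) < \rank (W (A :|: B)))%N
    & (\rank (W A) + \rank (W B) + 1 <= d)%N].
Proof.
move=> nA nB disAB nzAB hg; split; last exact: mxrank_diff_space_cross hg.
- have /set0Pn[b0 b0B] := nB; have /set0Pn[a0 a0A] := nA.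
  apply: (mxrank_diff_space_cone (c := b0) (y0 := a0) (g := g)) => //.
  + exact: subsetUl.
  + by rewrite inE b0B orbT.
  + by rewrite (disjointFl disAB b0B).
  + by move=> a aA; rewrite phiC ?hg ?nzAB // inE ?aA ?b0B ?orbT.
- have /set0Pn[a0 a0A] := nA; have /set0Pn[b0 b0B] := nB.
  apply: (mxrank_diff_space_cone (c := a0) (y0 := b0) (g := g)) => //.
  + exact: subsetUr.
  + by rewrite inE a0A.
  + by rewrite (disjointFr disAB a0A).
  + by move=> b bB; apply: hg.
Qed.

Lemma up_log_card_leftover S : leftover rank S -> {in S, forall x, nzvec x} ->
  (up_log 2 #|S| <= \rank (W S))%N.
Proof.
elim=> [x _|A B g nA nB disAB _ IHA _ IHB _ hg _ _ nzAB]; first by rewrite cards1 up_log1.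
have [rkA rkB _] := mxrank_diff_space_split nA nB disAB nzAB hg.
rewrite cardsU (disjoint_setI0 disAB) cards0 subn0; apply: up_logD_lt.
  by apply: leq_ltn_trans rkA; apply: IHA => x xA; rewrite nzAB // inE xA.
by apply: leq_ltn_trans rkB; apply: IHB => x xB; rewrite nzAB // inE xB orbT.
Qed.

Lemma leftover_admissible S T : leftover rank S -> {in S, forall x, nzvec x} ->
  (2 <= #|S|)%N -> (\rank (W S) + T <= d)%N -> admissible d T #|S|.
Proof.
move=> lS; elim: lS T => [x T _|A B g nA nB disAB lA IHA lB IHB _ hg _ _ T nzAB];
  first by rewrite cards1.
have nzA : {in A, forall x, nzvec x} by move=> x xA; rewrite nzAB // inE xA.
have nzB : {in B, forall x, nzvec x} by move=> x xB; rewrite nzAB // inE xB orbT.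
have [rkA rkB rkAB] := mxrank_diff_space_split nA nB disAB nzAB hg.
rewrite cardsU (disjoint_setI0 disAB) cards0 subn0 => _ hT.
apply: (admissible_split _ _ (up_log_card_leftover lA nzA)
                             (up_log_card_leftover lB nzB) rkA rkB rkAB hT).
- by rewrite card_gt0.
- by rewrite card_gt0.
- by move=> T'; apply: IHA.
- by move=> T'; apply: IHB.
Qed.

End Colouring.

Theorem lemma3p11 (F : finFieldType) (rank : F -> nat) (d p T : nat)
  (S : {set vec F d}) (a : 'I_T -> vec F d) (alpha : 'I_T -> color F d) :
  odd #|F| ->
  {in [pred u : F | u != 0%R] &, injective rank} ->
  (0 < d)%N -> (2 <= p)%N ->
  (forall s, s \in S -> nzvec s) ->
  #|S| = p ->
  leftover rank S ->
  (forall i, nzvec (a i)) ->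
  injective a ->
  (forall i, a i \notin S) ->
  (forall i j : 'I_T, (i < j)%N -> phi rank (a i) (a j) = alpha i) ->
  (forall i s, s \in S -> phi rank (a i) s = alpha i) ->
  exists x : seq nat,
    sumn x = p.-1 /\
    (forall k, (k < size x)%N ->
       let s := sumn (take k x) in
       let xk := nth 0%N x k in
       [/\ (1 <= xk <= (p - s)./2)%N,
           (up_log 2 xk + up_log 2 (p - s - xk) + 1 <= d)%N
         & (up_log 2 (p - s - xk) + k.+1 + T <= d)%N]).
Proof.
move=> _ rank_inj _ p_ge2 nzS cardS lS _ a_inj aS h_aa h_aS.
have [s0 s0S] : exists s0, s0 \in S.
  by apply/set0Pn; rewrite -card_gt0 cardS ltnW.
have sorted_enum : sorted (fun i j : 'I_T => (i < j)%N) (enum 'I_T).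
  by have := iota_ltn_sorted 0 T; rewrite -val_enum_ord sorted_map.
have := mxrank_diff_space_chain s0S a_inj aS h_aa h_aS sorted_enum.
rewrite size_enum_ord => rkST.
rewrite -cardS; apply: (leftover_admissible rank_inj lS nzS); first by rewrite cardS.
exact: leq_trans rkST (rank_leq_col _).
Qed.
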